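(* Fix integers $2\le k\le n'\le n$, $M=\lceil n/n'\rceil$, $r=n-(M-1)n'$, and consider the $n'$-grouped $(k,n)$ random-grid sharing of a secret bit $s$ described in the context. Let $\vec\lambda=(\lambda_1,\ldots,\lambda_M)$ be a valid partition and suppose $\lambda_j$ share bits (shadow images) are selected from group $j$ for each $j$. For $s\in\{0,1\}$ let $t_s$ be the probability that the logical OR of the selected share bits equals $0$ when the secret bit is $s$. Then $$t_0=\frac{\Pr(\#C(\vec\lambda)=k)}{2^{k-1}}+\sum_{g=1}^{k-1}\frac{\Pr(\#C(\vec\lambda)=g)}{2^g},\qquad t_1=\sum_{g=1}^{k-1}\frac{\Pr(\#C(\vec\lambda)=g)}{2^g},$$ and the contrast of the recovered image is $$\alpha=\frac{t_0-t_1}{1+t_1}=\frac{\Pr(\#C(\vec\lambda)=k)/2^{k-1}}{1+\sum_{g=1}^{k-1}\Pr(\#C(\vec\lambda)=g)/2^g}.$$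
   Context: Basic bits: for a secret bit $s\in\{0,1\}$, $b_1,\ldots,b_{k-1}$ are independent uniform bits and $b_k=s\oplus b_1\oplus\cdots\oplus b_{k-1}$. There is a fixed sequence $c=(c_1,\ldots,c_{n'})\in\{1,\ldots,k\}^{n'}$ in which every value $1,\ldots,k$ occurs. The $n$ share bits are arranged in $M$ groups: groups $1,\ldots,M-1$ have $n'$ positions and group $M$ has $r$ positions. For each group $j$, an independent uniformly random permutation $\sigma_j$ of $\{1,\ldots,n'\}$ is drawn (independent of the $b_i$), and the $\delta$-th position of group $j$ carries the index $c_{\sigma_j(\delta)}$ and the bit $b_{c_{\sigma_j(\delta)}}$ ($\delta\le r$ for group $M$). Position $\delta$ of group $j$ is the share bit of shadow image $(j-1)n'+\delta$; the scheme is applied independently to every pixel, and stacking shadow images computes the OR of their bits (0 = transparent, 1 = opaque). A valid partition is a vector $\vec\lambda=(\lambda_1,\ldots,\lambda_M)$ of non-negative integers with $\max_j\lambda_j\le n'$ and $\lambda_M\le r$. $C(\vec\lambda)$ is the multiset of indices carried by the selected positions (fixed positions, $\lambda_j$ of them in group $j$) and $\#C(\vec\lambda)$ is the number of its distinct elements; probabilities are over all the randomness. The contrast of a recovered image is defined as $(t_0-t_1)/(1+t_1)$, where $t_s$ is the light transmission (probability of a $0$ pixel) of recovered pixels whose secret pixel is $s$. *)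

From HB Require Import structures.
From mathcomp Require Import all_boot all_order all_algebra all_fingroup.
Set Implicit Arguments. Unset Strict Implicit. Unset Printing Implicit Defensive.
Import Order.TTheory GRing.Theory Num.Theory.

(* Indices 1..k of the paper are represented by 'I_k (index i+1 <-> i).
   Shadow images 1..n by 'I_n (shadow i+1 <-> i); groups 1..M by 'I_M;
   positions 1..n' inside a group by 'I_n'. *)

(* M = ceil(n / n'); for n >= 1, n' >= 1 this is (n-1) %/ n' + 1. *)
Definition Mg (n n' : nat) : nat := (n.-1 %/ n').+1.

(* r = n - (M-1) n' : size of the last group. *)
Definition rg (n n' : nat) : nat := n - (Mg n n').-1 * n'.

Definition grp (n n' : nat) (i : 'I_n) : 'I_(Mg n n') := inord (i %/ n').

Definition pos (n' : nat) (H : 1 < n') (i : nat) : 'I_n' :=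
  Ordinal (ltn_pmod i (ltnW H)).

(* The basic bits: b_1..b_{k-1} are the free bits f, and
   b_k = s xor b_1 xor ... xor b_{k-1}. *)
Definition bitval (k : nat) (s : bool) (f : {ffun 'I_k.-1 -> bool}) (i : 'I_k)
  : bool :=
  oapp (fun j : 'I_k.-1 => f j) (s (+) \big[addb/false]_(j < k.-1) f j)
       (insub (val i) : option 'I_k.-1).

(* Sample space: free bits and one permutation per group, all uniform. *)
Definition Omega (k n n' : nat) : finType :=
  ({ffun 'I_k.-1 -> bool} * {ffun 'I_(Mg n n') -> {perm 'I_n'}})%type.

Definition Pr (R : numFieldType) (T : finType) (P : pred T) : R :=
  #|[set w | P w]|%:R / #|T|%:R.

Definition carried (k n n' : nat) (c : 'I_n' -> 'I_k) (H : 1 < n')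
  (sig : {ffun 'I_(Mg n n') -> {perm 'I_n'}}) (i : 'I_n) : 'I_k :=
  c (sig (grp n' i) (pos H i)).

(* Stacking the selected shadows X gives a transparent (0) pixel:
   the OR of the selected share bits is 0. *)
Definition stack0 (k n n' : nat) (c : 'I_n' -> 'I_k) (H : 1 < n')
  (X : {set 'I_n}) (s : bool) (w : Omega k n n') : bool :=
  [forall i in X, ~~ bitval s w.1 (carried c H w.2 i)].

Definition numC (k n n' : nat) (c : 'I_n' -> 'I_k) (H : 1 < n')
  (X : {set 'I_n}) (w : Omega k n n') : nat :=
  #|[set carried c H w.2 i | i in X]|.

Definition lam (n n' : nat) (X : {set 'I_n}) (j : 'I_(Mg n n')) : nat :=
  #|[set i in X | grp n' i == j]|.

From mathcomp Require Import all_boot all_order all_algebra all_fingroup.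
Import Order.TTheory GRing.Theory Num.Theory.

Set Implicit Arguments.
Unset Strict Implicit.
Unset Printing Implicit Defensive.

(* Fix the permutations.  The selected share bits then expose exactly the
   basic bits indexed by the set C of carried indices, and the stacked pixel is
   transparent iff all of them vanish.  The basic-bit vector is uniform among
   the vectors of parity s.  If #C < k, flipping one bit outside C exchanges the
   two parity classes of vectors vanishing on C, so 2^(k-1-#C) of the 2^(k-1)
   choices of free bits qualify; if #C = k only the zero vector qualifies, and
   it has parity 0.  Averaging over the permutations according to the value of
   #C gives t_s, and the contrast formula follows from t_0 - t_1 = Pr(#C = k) /
   2^(k-1). *)

Lemma forall_in_imset (T U : finType) (g : T -> U) (X : {set T}) (p : pred U) :
  [forall i in X, p (g i)] = [forall x in g @: X, p x].
Proof.
apply/forall_inP/forall_inP => [pgX _ /imsetP[i iX ->] | pX i iX]; first exact: pgX.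
by apply: pX; apply: imset_f.
Qed.

Section BitVectors.

Variable m : nat.
Implicit Types (A : {set 'I_m}) (f : {ffun 'I_m -> bool}).

Definition parity f : bool := \big[addb/false]_(j < m) f j.

Definition zero_on A f : bool := [forall j in A, ~~ f j].

Definition flip_at (j0 : 'I_m) f : {ffun 'I_m -> bool} :=
  [ffun j => (j == j0) (+) f j].

Lemma card_zero_on A : #|[set f | zero_on A f]| = 2 ^ (m - #|A|).
Proof.
have -> : [set f | zero_on A f] = [set f in pffun_on false (~: A) predT].
  apply/setP=> f; rewrite !inE; apply/forallP/pffun_onP => [zf | [/subsetP zf _] j].
    split=> [|j _ //]; apply/subsetP=> j; rewrite !inE; apply: contra => jA.
    by have := zf j; rewrite jA; case: (f j).
  by apply/implyP=> jA; apply: contraL jA => fj; have := zf j; rewrite !inE fj => /(_ isT).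
by rewrite cardsE card_pffun_on card_bool [#|~: A|]cardsCs setCK card_ord.
Qed.

Lemma flip_atK j0 : involutive (flip_at j0).
Proof. by move=> f; apply/ffunP=> j; rewrite !ffunE addbA addbb. Qed.

Lemma parity_flip_at j0 f : parity (flip_at j0 f) = ~~ parity f.
Proof.
rewrite /parity (bigD1 j0) // [in RHS](bigD1 j0) //= ffunE eqxx addTb addNb.
by congr (~~ (_ (+) _)); apply: eq_bigr => j /negbTE jj0; rewrite ffunE jj0.
Qed.

Lemma zero_on_flip_at A j0 f : j0 \notin A -> zero_on A (flip_at j0 f) = zero_on A f.
Proof.
move=> j0A; apply: eq_forallb_in => j jA; rewrite ffunE.
by have -> : (j == j0) = false by apply: contraNF j0A => /eqP <-.
Qed.

Lemma card_zero_on_parity A s : (#|A| < m)%N ->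
  #|[set f | zero_on A f && (parity f == s)]| = 2 ^ (m - #|A|).-1.
Proof.
move=> ltAm; have /set0Pn[j0] : ~: A != set0.
  by rewrite -card_gt0 [#|~: A|]cardsCs setCK card_ord subn_gt0.
rewrite inE => j0A.
pose Z b := [set f | zero_on A f && (parity f == b)].
have sizeZ b : #|Z (~~ b)| = #|Z b|.
  rewrite -(card_preimset (Z b) (can_inj (flip_atK j0))); apply: eq_card => f.
  by rewrite !inE zero_on_flip_at // parity_flip_at eqb_negLR.
have splitZ : (#|Z s| + #|Z (~~ s)| = 2 ^ (m - #|A|))%N.
  rewrite -card_zero_on -(cardsID [set f | parity f == s] [set f | zero_on A f]).
  by congr (_ + _); apply: eq_card => f; rewrite !inE andbC; case: (parity f); case: s.
rewrite -subn_gt0 in ltAm; move: ltAm splitZ; rewrite -/(Z s) sizeZ addnn.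
by case: (m - #|A|)%N => // e _; rewrite expnS mul2n => /double_inj.
Qed.

Lemma card_zero_on_setT_parity s :
  #|[set f | zero_on [set: 'I_m] f && (parity f == s)]| = ~~ s.
Proof.
have parity0 : parity [ffun=> false] = false by rewrite /parity big1 // => j _; rewrite ffunE.
have -> : [set f | zero_on [set: 'I_m] f && (parity f == s)]
          = if s then set0 else [set [ffun=> false]].
  apply/setP=> f; rewrite inE; have -> : zero_on [set: 'I_m] f = (f == [ffun=> false]).
    apply/forall_inP/eqP => [zf | -> j _]; last by rewrite ffunE.
    by apply/ffunP=> j; rewrite ffunE; apply/negbTE/zf; rewrite inE.
  by case: s; rewrite ?inE; case: eqP => // ->; rewrite parity0.
by case: s; rewrite ?cards0 ?cards1.
Qed.

End BitVectors.

(* [k] is the paper's k-1: the secret and [k] free bits give [k.+1] basic bits. *)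
Section BasicBits.

Variable k : nat.
Implicit Types (s : bool) (f : {ffun 'I_k -> bool}) (b : {ffun 'I_k.+1 -> bool}).

Definition basic_bits s f : {ffun 'I_k.+1 -> bool} := [ffun i => @bitval k.+1 s f i].

Definition free_bits b : {ffun 'I_k -> bool} := [ffun j => b (widen_ord (leqnSn k) j)].

Lemma bitval_widen s f j : @bitval k.+1 s f (widen_ord (leqnSn k) j) = f j.
Proof. by rewrite /bitval /= valK. Qed.

Lemma bitval_ord_max s f : @bitval k.+1 s f ord_max = s (+) parity f.
Proof. by rewrite /bitval insubF //= ltnn. Qed.

Lemma parity_ord_recr b : parity b = parity (free_bits b) (+) b ord_max.
Proof.
by rewrite /parity big_ord_recr; congr (_ (+) _); apply: eq_bigr => j _; rewrite ffunE.
Qed.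

Lemma basic_bitsK s : cancel (basic_bits s) free_bits.
Proof. by move=> f; apply/ffunP=> j; rewrite !ffunE bitval_widen. Qed.

Lemma parity_basic_bits s f : parity (basic_bits s f) = s.
Proof.
by rewrite parity_ord_recr basic_bitsK ffunE bitval_ord_max addbCA addbb addbF.
Qed.

Lemma free_bitsK s b : parity b = s -> basic_bits s (free_bits b) = b.
Proof.
move=> pb; apply/ffunP=> i; rewrite ffunE; case: (ltnP i k) => [ltik | geik].
  have -> : i = widen_ord (leqnSn k) (Ordinal ltik) by apply: val_inj.
  by rewrite bitval_widen ffunE.
have -> : i = ord_max by apply/val_inj/anti_leq; rewrite geik -ltnS ltn_ord.
by rewrite bitval_ord_max -pb parity_ord_recr addbAC addbb.
Qed.

Lemma card_basic_bits s (P : pred {ffun 'I_k.+1 -> bool}) :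
  #|[set f | P (basic_bits s f)]| = #|[set b | P b && (parity b == s)]|.
Proof.
rewrite -(card_imset _ (can_inj (basic_bitsK s))); apply: eq_card => b.
apply/imsetP/idP => [[f Pf ->] | ].
  by rewrite inE in Pf; rewrite inE Pf parity_basic_bits eqxx.
by rewrite inE => /andP[Pb /eqP pb]; exists (free_bits b); rewrite ?inE free_bitsK.
Qed.

Lemma card_bitval_zero_on s (S : {set 'I_k.+1}) :
  #|[set f | [forall i in S, ~~ @bitval k.+1 s f i]]|
  = if (#|S| < k.+1)%N then 2 ^ (k - #|S|) else ~~ s.
Proof.
have -> : [set f | [forall i in S, ~~ @bitval k.+1 s f i]]
          = [set f | zero_on S (basic_bits s f)].
  by apply/setP=> f; rewrite !inE; apply: eq_forallb_in => i _; rewrite ffunE.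
rewrite card_basic_bits; case: ltnP => [ltSk | geSk].
  by rewrite card_zero_on_parity // subSn.
have -> : S = [set: 'I_k.+1].
  by apply/eqP; rewrite eqEcard subsetT cardsT card_ord.
exact: card_zero_on_setT_parity.
Qed.

End BasicBits.

Local Open Scope ring_scope.

Lemma card_set_pair (T1 T2 : finType) (P : pred (T1 * T2)) :
  #|[set w | P w]| = (\sum_(y : T2) #|[set x : T1 | P (x, y)]|)%N.
Proof.
rewrite -sum1dep_card; under [RHS]eq_bigr => y _ do rewrite -sum1dep_card.
rewrite (exchange_big_dep xpredT) //= pair_big_dep /=.
by apply: eq_bigl => -[x y].
Qed.

Lemma Pr_pair (R : numFieldType) (T1 T2 : finType) (P : pred (T1 * T2)) :
  Pr R P = (\sum_(y : T2) #|[set x : T1 | P (x, y)]|%:R) / (#|T1| * #|T2|)%:R.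
Proof. by rewrite /Pr card_set_pair natr_sum card_prod. Qed.

Lemma sum_by_value (V : nmodType) (T : finType) (nu : T -> nat) (a b : nat)
    (F : nat -> V) :
  (forall x, (a <= nu x < b)%N) ->
  \sum_(x : T) F (nu x) = \sum_(a <= g < b) \sum_(x | nu x == g) F g.
Proof.
move=> nu_range; rewrite (exchange_big_dep xpredT) //=.
apply: eq_bigr => x _; under eq_bigl => g do rewrite eq_sym.
by rewrite big_nat1_eq nu_range.
Qed.

Lemma Pr_pair_by_value (R : numFieldType) (T1 T2 : finType) (P : pred (T1 * T2))
    (nu : T2 -> nat) (h : nat -> nat) (a b : nat) :
  (0 < #|T1|)%N -> (forall y, (a <= nu y < b)%N) ->
  (forall y, #|[set x : T1 | P (x, y)]| = h (nu y)) ->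
  Pr R P = \sum_(a <= g < b) Pr R (fun w : T1 * T2 => nu w.2 == g) * ((h g)%:R / #|T1|%:R).
Proof.
move=> T1_gt0 nu_range hP; rewrite Pr_pair.
under eq_bigr => y _ do rewrite hP.
rewrite (sum_by_value (fun g => (h g)%:R) nu_range) mulr_suml; apply: eq_bigr => g _.
rewrite Pr_pair !mulr_suml big_mkcond /=; apply: eq_bigr => y _.
case: eqP => _; last by rewrite cards0 !mul0r.
by rewrite cardsT [RHS]mulrC !mulrA mulfVK // pnatr_eq0 -lt0n.
Qed.

Lemma exp2_subn_div (R : numFieldType) (k g : nat) :
  (g <= k)%N -> (2 ^ (k - g))%:R / (2 ^ k)%:R = (2 ^+ g)^-1 :> R.
Proof.
move=> legk; rewrite -{2}(subnK legk) expnD natrM invfM mulrA divff ?mul1r ?natrX //.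
by rewrite expf_neq0 // pnatr_eq0.
Qed.

Theorem theorem1 (R : realFieldType) (k n' n : nat)
  (hk : (1 < k)%N) (hkn : (k <= n')%N) (hn : (n' <= n)%N)
  (c : 'I_n' -> 'I_k) (hc : forall v : 'I_k, exists d : 'I_n', c d = v)
  (X : {set 'I_n}) (hX : X != set0) :
  let H := leq_trans hk hkn in
  let t (s : bool) : R := Pr R (stack0 c H X s) in
  let pC (g : nat) : R := Pr R (fun w : Omega k n n' => numC c H X w == g) in
  [/\ t false = pC k / 2 ^+ k.-1 + \sum_(1 <= g < k) pC g / 2 ^+ g,
      t true = \sum_(1 <= g < k) pC g / 2 ^+ g
    & (t false - t true) / (1 + t true)
      = (pC k / 2 ^+ k.-1) / (1 + \sum_(1 <= g < k) pC g / 2 ^+ g)].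
Proof.
move: hk hkn c hc; case: k => [|k] // hk hkn c hc H t pC.
pose nu sig := #|[set carried c H sig i | i in X]|.
have nu_range sig : (1 <= nu sig < k.+2)%N.
  rewrite ltnS card_gt0; apply/andP; split; last by rewrite -(card_ord k.+1) max_card.
  by case/set0Pn: hX => i iX; apply/set0Pn; exists (carried c H sig i); apply: imset_f.
have card_stack0 s sig : #|[set f | stack0 c H X s (f, sig)]|
    = (if nu sig < k.+1 then 2 ^ (k - nu sig) else ~~ s)%N.
  rewrite -card_bitval_zero_on; apply: eq_card => f; rewrite !inE /stack0 /=.
  exact: (forall_in_imset _ _ (fun i => ~~ bitval s f i)).
have card_free_gt0 : (0 < #|{ffun 'I_k -> bool}|)%N.
  by rewrite card_ffun card_bool card_ord expn_gt0.
have tE s : t s = (~~ s)%:R * (pC k.+1 / 2 ^+ k) + \sum_(1 <= g < k.+1) pC g / 2 ^+ g.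
  pose h v := (if v < k.+1 then 2 ^ (k - v) else ~~ s)%N.
  rewrite /t; apply: etrans
    (Pr_pair_by_value (h := h) _ card_free_gt0 nu_range (card_stack0 s)) _.
  under eq_bigr => g _ do rewrite -[Pr R _]/(pC g).
  rewrite big_nat_recr //= /h ltnn addrC card_ffun card_bool card_ord.
  congr (_ + _); first by rewrite natrX mulrCA.
  rewrite big_nat_cond [RHS]big_nat_cond.
  by apply: eq_bigr => g /andP[/andP[_ ltgk] _]; rewrite ltgk exp2_subn_div.
have t0 : t false = pC k.+1 / 2 ^+ k + \sum_(1 <= g < k.+1) pC g / 2 ^+ g.
  by rewrite tE mul1r.
have t1 : t true = \sum_(1 <= g < k.+1) pC g / 2 ^+ g by rewrite tE mul0r add0r.
by split=> //; rewrite t0 t1 addrK.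
Qed.
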